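(* Let $\Sigma$ be a subshift and let $\mathcal G$ be a proper subset of $\mathcal L(\Sigma)$ containing the empty word. If $\mathcal G$ has (W')-specification with gap size $t$, then $\mathcal G$ has (W)-specification with gap size $t$.
   Context: $\Sigma\subset\{0,\ldots,m-1\}^{\mathbb N}$ or $\{0,\ldots,m-1\}^{\mathbb Z}$ is a closed shift-invariant set; $\mathcal L(\Sigma)$ is the set of the empty word $\emptyset$ (with $\emptyset w=w\emptyset=w$, $|\emptyset|=0$) and all finite words appearing in elements of $\Sigma$. (W)-specification: a proper subset $\mathcal G\subset\mathcal L(\Sigma)$ has (W)-specification with gap size $t\geq0$ if for every integer $k\geq2$ and all $v^1,\ldots,v^k\in\mathcal G$ there are $w^1,\ldots,w^{k-1}\in\mathcal L(\Sigma)$ with $|w^i|\leq t$ and $v^1w^1v^2w^2\cdots w^{k-1}v^k\in\mathcal L(\Sigma)$. (W')-specification: a subset $\mathcal G\subset\mathcal L(\Sigma)$ containing the empty word has (W')-specification with gap size $t\ge0$ if for all integers $j,k\geq2$, all $v^1,\ldots,v^{j+k}\in\mathcal G$ and all $w^1,\ldots,w^{j+k-1}\in\mathcal L(\Sigma)$ with $|w^i|\leq t$ such that $u:=v^1w^1v^2\cdots w^{j-1}v^j\in\mathcal L(\Sigma)$ and $v:=v^{j+1}w^{j+1}\cdots w^{j+k-1}v^{j+k}\in\mathcal L(\Sigma)$, there is $w\in\mathcal L(\Sigma)$ with $|w|\leq t$ and $uwv\in\mathcal L(\Sigma)$. *)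

From mathcomp Require Import all_boot all_algebra.
Set Implicit Arguments. Unset Strict Implicit. Unset Printing Implicit Defensive.
Import GRing.Theory Num.Theory.

Definition word (m : nat) := seq 'I_m.

Definition onesided_shift_invariant m (S : (nat -> 'I_m) -> Prop) : Prop :=
  forall x, S x -> S (fun n => x n.+1).

(* closed in the product topology of discrete spaces *)
Definition onesided_closed m (S : (nat -> 'I_m) -> Prop) : Prop :=
  forall x : nat -> 'I_m,
    (forall N : nat, exists y, S y /\ forall n, n < N -> y n = x n) -> S x.

Definition onesided_subshift m (S : (nat -> 'I_m) -> Prop) : Prop :=
  onesided_closed S /\ onesided_shift_invariant S.

Definition appears_nat m (w : word m) (x : nat -> 'I_m) : Prop :=
  exists i : nat, forall k (hk : k < size w), x (i + k) = tnth (in_tuple w) (Ordinal hk).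

Definition lang_onesided m (S : (nat -> 'I_m) -> Prop) (w : word m) : Prop :=
  w = [::] \/ exists x, S x /\ appears_nat w x.

Definition twosided_shift_invariant m (S : (int -> 'I_m) -> Prop) : Prop :=
  forall x, S x <-> S (fun n => x (n + 1)%R).

Definition twosided_closed m (S : (int -> 'I_m) -> Prop) : Prop :=
  forall x : int -> 'I_m,
    (forall N : nat, exists y, S y /\
       forall n : int, (`|n|%N <= N)%N -> y n = x n) -> S x.

Definition twosided_subshift m (S : (int -> 'I_m) -> Prop) : Prop :=
  twosided_closed S /\ twosided_shift_invariant S.

Definition appears_int m (w : word m) (x : int -> 'I_m) : Prop :=
  exists i : int, forall k (hk : k < size w),
    x (i + k%:Z)%R = tnth (in_tuple w) (Ordinal hk).

Definition lang_twosided m (S : (int -> 'I_m) -> Prop) (w : word m) : Prop :=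
  w = [::] \/ exists x, S x /\ appears_int w x.

Definition is_subshift_language m (Lang : word m -> Prop) : Prop :=
  (exists S, onesided_subshift S /\ forall w, Lang w <-> lang_onesided S w) \/
  (exists S, twosided_subshift S /\ forall w, Lang w <-> lang_twosided S w).

(* glue v1 [w1;...;wn] [v2;...;v(n+1)] = v1 w1 v2 w2 ... wn v(n+1)
   (used with size ws = size vs). *)
Definition glue m (v1 : word m) (ws vs : seq (word m)) : word m :=
  v1 ++ flatten (map (fun p => p.1 ++ p.2) (zip ws vs)).

Definition gaps_ok m (Lang : word m -> Prop) (t : nat) (ws : seq (word m)) : Prop :=
  forall w, w \in ws -> Lang w /\ size w <= t.

Definition proper_subset m (G Lang : word m -> Prop) : Prop :=
  (forall w, G w -> Lang w) /\ exists w, Lang w /\ ~ G w.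

(* (W)-specification with gap size t (k = size vs + 1 >= 2 words). *)
Definition W_spec m (Lang G : word m -> Prop) (t : nat) : Prop :=
  proper_subset G Lang /\
  forall (v1 : word m) (vs : seq (word m)),
    1 <= size vs -> G v1 -> (forall v, v \in vs -> G v) ->
    exists ws : seq (word m),
      size ws = size vs /\ gaps_ok Lang t ws /\ Lang (glue v1 ws vs).

(* (W')-specification with gap size t: u = v1 w1 ... vj (j = size vs1 + 1 >= 2),
   wj the j-th gap word, v = v(j+1) w(j+1) ... v(j+k) (k = size vs2 + 1 >= 2). *)
Definition W'_spec m (Lang G : word m -> Prop) (t : nat) : Prop :=
  (forall w, G w -> Lang w) /\ G [::] /\
  forall (v1 : word m) (vs1 ws1 : seq (word m)) (wj : word m)
         (v1' : word m) (vs2 ws2 : seq (word m)),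
    1 <= size vs1 -> 1 <= size vs2 ->
    G v1 -> (forall v, v \in vs1 -> G v) ->
    G v1' -> (forall v, v \in vs2 -> G v) ->
    size ws1 = size vs1 -> size ws2 = size vs2 ->
    gaps_ok Lang t ws1 -> gaps_ok Lang t ws2 -> Lang wj -> size wj <= t ->
    Lang (glue v1 ws1 vs1) -> Lang (glue v1' ws2 vs2) ->
    exists w : word m, Lang w /\ size w <= t /\
      Lang (glue v1 ws1 vs1 ++ w ++ glue v1' ws2 vs2).

From mathcomp Require Import all_boot all_algebra.

(* Padding with empty words, which lie in G, turns any gluing of words of G
   into one with at least two blocks on each side, so (W') can append one more
   word of G to an admissible gluing; (W) follows by induction on the number of
   words. *)

Lemma glue_rcons {m} (v1 : word m) ws vs w v :
  size ws = size vs ->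
  glue v1 (rcons ws w) (rcons vs v) = glue v1 ws vs ++ w ++ v.
Proof.
move=> eq_size; rewrite /glue zip_rcons // map_rcons -cats1 flatten_cat /=.
by rewrite cats0 !catA.
Qed.

Lemma glue_rcons_nil {m} (v1 : word m) ws vs :
  size ws = size vs -> glue v1 (rcons ws [::]) (rcons vs [::]) = glue v1 ws vs.
Proof. by move=> eq_size; rewrite glue_rcons //= cats0. Qed.

Lemma glue_nil1 {m} (v : word m) : glue v [:: [::]] [:: [::]] = v.
Proof. by rewrite /glue /= !cats0. Qed.

Lemma gaps_ok_rcons {m} {Lang : word m -> Prop} {t ws w} :
  gaps_ok Lang t ws -> Lang w -> size w <= t -> gaps_ok Lang t (rcons ws w).
Proof. by move=> ok_ws Lw sw x; rewrite mem_rcons inE => /predU1P [->|/ok_ws]. Qed.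

Lemma gaps_ok_nil1 {m} {Lang : word m -> Prop} t :
  Lang [::] -> gaps_ok Lang t [:: [::]].
Proof. by move=> L0 x; rewrite inE => /eqP ->. Qed.

Lemma all_G_rcons {m} {G : word m -> Prop} {vs v} :
  (forall x, x \in vs -> G x) -> G v -> forall x, x \in rcons vs v -> G x.
Proof. by move=> Gvs Gv x; rewrite mem_rcons inE => /predU1P [->|/Gvs]. Qed.

Lemma W'_spec_append {m} {Lang G : word m -> Prop} {t v1 vs ws v} :
  W'_spec Lang G t -> G v1 -> (forall x, x \in vs -> G x) -> G v ->
  size ws = size vs -> gaps_ok Lang t ws -> Lang (glue v1 ws vs) ->
  exists w, Lang w /\ size w <= t /\ Lang (glue v1 ws vs ++ w ++ v).
Proof.
move=> [GL [G0 W']] Gv1 Gvs Gv eq_size ok_ws Lu.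
have L0 : Lang [::] by apply: GL.
have vs0_nonempty : 0 < size (rcons vs [::]) by rewrite size_rcons.
have G_nil1 : forall x, x \in [:: [::]] -> G x by move=> x; rewrite inE => /eqP ->.
have eq_size0 : size (rcons ws [::]) = size (rcons vs [::]).
  by rewrite !size_rcons eq_size.
have Lu0 : Lang (glue v1 (rcons ws [::]) (rcons vs [::])) by rewrite glue_rcons_nil.
have Lv : Lang (glue v [:: [::]] [:: [::]]) by rewrite glue_nil1; apply: GL.
have [w [Lw [sw Luwv]]] :=
  W' v1 (rcons vs [::]) (rcons ws [::]) [::] v [:: [::]] [:: [::]]
     vs0_nonempty isT Gv1 (all_G_rcons Gvs G0) Gv G_nil1 eq_size0 erefl
     (gaps_ok_rcons ok_ws L0 (leq0n t)) (gaps_ok_nil1 t L0) L0 (leq0n t) Lu0 Lv.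
by exists w; rewrite glue_rcons_nil // glue_nil1 in Luwv.
Qed.

Lemma W'_spec_glue {m} {Lang G : word m -> Prop} {t v1 vs} :
  W'_spec Lang G t -> G v1 -> (forall x, x \in vs -> G x) ->
  exists ws, size ws = size vs /\ gaps_ok Lang t ws /\ Lang (glue v1 ws vs).
Proof.
move=> W' Gv1; elim/last_ind: vs => [|vs v IH] Gvs.
  have [GL _] := W'.
  by exists [::]; split=> //; split=> [x|]; rewrite ?in_nil // /glue cats0; apply: GL.
have Gvs' : forall x, x \in vs -> G x.
  by move=> x vs_x; apply: Gvs; rewrite mem_rcons inE vs_x orbT.
have [ws [eq_size [ok_ws Lu]]] := IH Gvs'.
have Gv : G v by apply: Gvs; rewrite mem_rcons mem_head.
have [w [Lw [sw Luwv]]] := W'_spec_append W' Gv1 Gvs' Gv eq_size ok_ws Lu.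
exists (rcons ws w); rewrite !size_rcons eq_size glue_rcons //.
by split=> //; split=> //; apply: gaps_ok_rcons.
Qed.

Theorem lemma2p3 (m : nat) (Lang G : word m -> Prop) (t : nat) :
  is_subshift_language Lang ->
  proper_subset G Lang -> G [::] ->
  W'_spec Lang G t -> W_spec Lang G t.
Proof.
move=> _ G_proper _ W'; split=> // v1 vs _ Gv1 Gvs.
exact: W'_spec_glue W' Gv1 Gvs.
Qed.
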